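(* Let $\lambda\in\mathbb R\cup i\mathbb R$ be a constant, $\vec H\in\Gamma(E)$, and let $\varphi\in\Gamma(\Sigma)$ solve $D\varphi=\vec H\cdot\varphi-2\lambda\varphi$. Fix $p\in M$, an orthonormal basis $(e_1,e_2)$ of $T_pM$, and a unit vector $e_3\in E_p$ with $\vec H(p)=|\vec H(p)|e_3$. With $F_{++},F_{--},F_{+-},F_{-+}$ defined by $F_{++}(X,Y)=\Re e\langle\nabla_X\varphi^{++},Y\cdot e_3\cdot\varphi^{--}\rangle$, $F_{--}(X,Y)=\Re e\langle\nabla_X\varphi^{--},Y\cdot e_3\cdot\varphi^{++}\rangle$, $F_{+-}(X,Y)=\Re e\langle\nabla_X\varphi^{+-},Y\cdot e_3\cdot\varphi^{-+}\rangle$, $F_{-+}(X,Y)=\Re e\langle\nabla_X\varphi^{-+},Y\cdot e_3\cdot\varphi^{+-}\rangle$, one has at $p$: $F_{++}(e_1,e_2)=F_{++}(e_2,e_1)-2\Re e\langle\lambda\varphi^{-+},e_1\cdot e_2\cdot e_3\cdot\varphi^{--}\rangle$, $F_{--}(e_1,e_2)=F_{--}(e_2,e_1)-2\Re e\langle\lambda\varphi^{+-},e_1\cdot e_2\cdot e_3\cdot\varphi^{++}\rangle$, $F_{+-}(e_1,e_2)=F_{+-}(e_2,e_1)-2\Re e\langle\lambda\varphi^{--},e_1\cdot e_2\cdot e_3\cdot\varphi^{-+}\rangle$, $F_{-+}(e_1,e_2)=F_{-+}(e_2,e_1)-2\Re e\langle\lambda\varphi^{++},e_1\cdot e_2\cdot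 e_3\cdot\varphi^{+-}\rangle$.
   Context: Setup. $(M^2,g)$ is an oriented Riemannian surface with a fixed spin structure, and $E\to M$ is an oriented real vector bundle of rank $2$ with a metric $\langle\cdot,\cdot\rangle$, a compatible connection $\nabla^E$ and a fixed spin structure. $\Sigma M=\Sigma^+M\oplus\Sigma^-M$ and $\Sigma E=\Sigma^+E\oplus\Sigma^-E$ denote the complex spinor bundles of $M$ and $E$ with their half-spinor splittings, spinorial connections $\nabla^{\Sigma M},\nabla^{\Sigma E}$ and Clifford multiplications $\cdot_M,\cdot_E$. The twisted spinor bundle is $\Sigma=\Sigma M\otimes\Sigma E$, with connection $\nabla=\nabla^{\Sigma M}\otimes\mathrm{Id}+\mathrm{Id}\otimes\nabla^{\Sigma E}$ and Clifford multiplication by vectors of $TM\oplus E$ given on $\varphi=\alpha\otimes\sigma$ by $X\cdot\varphi=(X\cdot_M\alpha)\otimes\overline{\sigma}$ if $X\in TM$ and $X\cdot\varphi=\alpha\otimes(X\cdot_E\sigma)$ if $X\in E$, where $\overline\sigma=\sigma^+-\sigma^-$; this extends to an action of the Clifford bundle $Cl(TM\oplus E)$. $\Sigma$ carries its natural Hermitian product $\langle\cdot,\cdot\rangle$ ($\mathbb C$-linear in the first slot, antilinear in the second), compatible with $\nabla$, for which Clifford multiplication by vectors is skew-Hermitian; $\Re e\langle\cdot,\cdot\rangle$ is the associated real scalar product and $|\cdot|$ the norm. The Dirac operator is $D\varphi=e_1\cdot\nabla_{e_1}\varphi+e_2\cdot\nabla_{e_2}\varphi$, $(e_1,e_2)$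 a local orthonormal frame of $TM$. Write $\Sigma^{\epsilon\delta}=\Sigma^\epsilon M\otimes\Sigma^\delta E$ ($\epsilon,\delta\in\{+,-\}$), decompose $\varphi=\varphi^{++}+\varphi^{--}+\varphi^{+-}+\varphi^{-+}$ accordingly, and set $\varphi^+=\varphi^{++}+\varphi^{--}$, $\varphi^-=\varphi^{+-}+\varphi^{-+}$. For $\lambda\in\mathbb C$, $\lambda X\cdot\varphi$ means complex scalar multiplication of $X\cdot\varphi$. *)

(* pointwise (fiber-at-p) model of the twisted spinor bundle
   Sigma_p = Sigma_p M (x) Sigma_p E  ~=  C^2 (x) C^2  ~=  2x2 complex matrices. *)
From HB Require Import structures.
From mathcomp Require Import all_boot all_order all_algebra.
Set Implicit Arguments. Unset Strict Implicit. Unset Printing Implicit Defensive.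
Import Order.TTheory GRing.Theory Num.Theory.
Local Open Scope ring_scope.

Section Spin.
Variable C : numClosedFieldType.

(* A spinor at p: A i j is the coefficient of  a_i (x) s_j  where
   (a_0,a_1) is a unitary basis of Sigma^+_pM (+) Sigma^-_pM and
   (s_0,s_1) a unitary basis of Sigma^+E_p (+) Sigma^-E_p.
   Index 0 = "+", index 1 = "-".  alpha (x) sigma  <->  alpha sigma^T. *)
Definition spinor := 'M[C]_2.

Definition ip : 'I_2 := 0.
Definition im : 'I_2 := 1.
Definition opp2 (i : 'I_2) : 'I_2 := if i == ip then im else ip.

(* Complex Clifford action of the real vector a f1 + b f2 (f1,f2 a fixed
   oriented orthonormal frame) on C^2 = Sigma^+ (+) Sigma^-:
   f1 = [[0,-1],[1,0]], f2 = [[0,i],[i,0]]. *)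
Definition gam (X : C * C) : 'M[C]_2 :=
  \matrix_(i < 2, j < 2)
    if i == j then 0 else if i == ip then - X.1 + X.2 * 'i else X.1 + X.2 * 'i.

(* sigma |-> bar sigma = sigma^+ - sigma^- *)
Definition barM : 'M[C]_2 :=
  \matrix_(i < 2, j < 2) if i == j then (if i == ip then 1 else -1) else 0.

(* X . (alpha (x) sigma) = (X .M alpha) (x) bar sigma   for X in T_pM *)
Definition clifTM (X : C * C) (A : spinor) : spinor := gam X *m A *m barM.
(* X . (alpha (x) sigma) = alpha (x) (X .E sigma)        for X in E_p *)
Definition clifE (X : C * C) (A : spinor) : spinor := A *m (gam X)^T.

Definition herm (A B : spinor) : C := \sum_(i < 2) \sum_(j < 2) A i j * (B i j)^*.

Definition proj (e d : 'I_2) (A : spinor) : spinor :=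
  \matrix_(k < 2, l < 2) if (k == e) && (l == d) then A e d else 0.

(* F_{eps delta}(X,Y) = Re < nabla_X phi^{eps delta}, Y . e3 . phi^{-eps,-delta} >,
   where dX = nabla_X phi (p) and nabla_X (phi^{eps delta}) = (nabla_X phi)^{eps delta}. *)
Definition Fcomp (e d : 'I_2) (dX : spinor) (Y e3 : C * C) (phi : spinor) : C :=
  'Re (herm (proj e d dX) (clifTM Y (clifE e3 (proj (opp2 e) (opp2 d) phi)))).

Definition corr (lam : C) (e d e' d' : 'I_2) (e1 e2 e3 : C * C) (phi : spinor) : C :=
  2 * 'Re (herm (lam *: proj e d phi) (clifTM e1 (clifTM e2 (clifE e3 (proj e' d' phi))))).

Definition realvec (X : C * C) : Prop := X.1 \is Num.real /\ X.2 \is Num.real.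
Definition dot (X Y : C * C) : C := X.1 * Y.1 + X.2 * Y.2.
Definition vnorm (X : C * C) : C := sqrtC (dot X X).

End Spin.

From HB Require Import structures.
From mathcomp Require Import all_boot all_order all_algebra.
From mathcomp Require Import ring.
Set Implicit Arguments. Unset Strict Implicit. Unset Printing Implicit Defensive.
Import Order.TTheory GRing.Theory Num.Theory.
Local Open Scope ring_scope.

(* At the point p the spinor, its covariant derivatives and
   the Clifford actions are 2x2 complex matrices; the Clifford matrix gam X of
   a tangent vector X is off-diagonal, so every quantity of the theorem is a
   single product of matrix entries.
   1. Entry formulas: the (i,j) entry of  X . A  picks the one off-diagonal
      entry of gam X; this gives closed forms for F_{ed}, for the correction
      term and for the (opp e, d) component of the Dirac equation.
   2. For a real unit vector X the off-diagonal entries z of gam X are unit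
      complex numbers with gam X i (opp i) = - conj (gam X (opp i) i), and
      orthogonal vectors give entries z1, z2 with z1 conj z2 purely imaginary.
   3. A scalar identity: if z1 u s + z2 v s = n q - 2 lam P (unit orthogonal
      z1, z2, real n, a sign s) then the F-identity holds for u, v.  It comes
      from  z1 v - z2 u = z1 conj(z2) s (n q - 2 lam P)  and the vanishing of
      the real part of  z1 conj(z2) n |q|^2.
   The four claims are the instances (e,d) = (+,+), (-,-), (+,-), (-,+) of one
   lemma, component_identity. *)

Lemma opp2K : involutive opp2.
Proof. by move=> i; apply/val_inj; case: i => [[|[|m]]]. Qed.

Lemma ord2_cases (i : 'I_2) : i = ip \/ i = im.
Proof. by case: i => [[|[|m]] Hm] //; [left | right]; apply/val_inj. Qed.

Section EntryFormulas.
Variable C : numClosedFieldType.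
Implicit Types (A B : 'M[C]_2) (X : C * C).

Lemma mulmx2E A B i j : (A *m B) i j = A i ip * B ip j + A i im * B im j.
Proof.
rewrite mxE !big_ord_recl big_ord0 addr0.
have -> : ord0 = ip by apply/val_inj.
by have -> : lift ord0 ord0 = im by apply/val_inj.
Qed.

(* The Clifford matrix gam X is off-diagonal, so multiplying by it (on either
   side) selects a single term of the matrix product. *)
Lemma gam_mul_entry X A i j : (gam X *m A) i j = gam X i (opp2 i) * A (opp2 i) j.
Proof. by rewrite mulmx2E; case: (ord2_cases i) => ->; rewrite !mxE /=; ring. Qed.

Lemma mul_bar_entry A i j : (A *m barM C) i j = A i j * barM C j j.
Proof. by rewrite mulmx2E; case: (ord2_cases j) => ->; rewrite !mxE /=; ring. Qed.

Lemma barM_real d : barM C d d \is Num.real.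
Proof. by case: (ord2_cases d) => ->; rewrite mxE /= ?rpredN rpred1. Qed.

Lemma barM_sq d : barM C d d * barM C d d = 1.
Proof. by case: (ord2_cases d) => ->; rewrite mxE /= ?mulrNN mulr1. Qed.

Lemma herm_proj e d A B : herm (proj e d A) B = A e d * (B e d)^*.
Proof.
rewrite /herm (bigD1 e) //= [X in _ + X]big1 => [|k /negbTE ke]; last first.
  by apply: big1 => l _; rewrite mxE ke mul0r.
rewrite (bigD1 d) //= big1 => [|l /negbTE ld]; last by rewrite mxE ld andbF mul0r.
by rewrite mxE !eqxx !addr0.
Qed.

Lemma hermZ a A B : herm (a *: A) B = a * herm A B.
Proof.
rewrite /herm mulr_sumr; apply: eq_bigr => i _; rewrite mulr_sumr.
by apply: eq_bigr => j _; rewrite mxE mulrA.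
Qed.

Lemma clifTM_entry X A i j :
  clifTM X A i j = gam X i (opp2 i) * A (opp2 i) j * barM C j j.
Proof. by rewrite /clifTM mul_bar_entry gam_mul_entry. Qed.

Lemma clifE_entry X A i j : clifE X A i j = A i (opp2 j) * gam X j (opp2 j).
Proof. by rewrite mulmx2E; case: (ord2_cases j) => ->; rewrite !mxE /=; ring. Qed.

Lemma Fcomp_entry e d dX Y Z phi :
  Fcomp e d dX Y Z phi =
  'Re (dX e d * (gam Y e (opp2 e) * (phi (opp2 e) (opp2 d) * gam Z d (opp2 d))
                 * barM C d d)^*).
Proof.
by rewrite /Fcomp herm_proj clifTM_entry clifE_entry [proj _ _ _ _ _]mxE !eqxx.
Qed.

Lemma corr_entry lam e d Y1 Y2 Z phi :
  corr lam (opp2 e) d (opp2 e) (opp2 d) Y1 Y2 Z phi =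
  2 * 'Re (lam * phi (opp2 e) d *
    (gam Y1 (opp2 e) e * (gam Y2 e (opp2 e) *
       (phi (opp2 e) (opp2 d) * gam Z d (opp2 d)) * barM C d d) * barM C d d)^*).
Proof.
rewrite /corr hermZ herm_proj !clifTM_entry opp2K clifE_entry.
by rewrite [proj _ _ _ _ _]mxE !eqxx mulrA.
Qed.

Lemma dirac_entry lam H Y1 Y2 phi d1 d2 e d :
  clifTM Y1 d1 + clifTM Y2 d2 = clifE H phi - (2 * lam) *: phi ->
  gam Y1 (opp2 e) e * d1 e d * barM C d d + gam Y2 (opp2 e) e * d2 e d * barM C d d
  = phi (opp2 e) (opp2 d) * gam H d (opp2 d) - 2 * lam * phi (opp2 e) d.
Proof.
move=> /matrixP/(_ (opp2 e) d).
rewrite [(_ + _ : 'M_2) _ _]mxE [(_ - _ : 'M_2) _ _]mxE.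
rewrite [(- _ : 'M_2) _ _]mxE [(_ *: _ : 'M_2) _ _]mxE.
by rewrite !clifTM_entry clifE_entry opp2K.
Qed.

End EntryFormulas.

Section RealVectors.
Variable C : numClosedFieldType.
Implicit Types (X Y : C * C).

Lemma gam_skew X i j : realvec X -> (gam X i j)^* = - gam X j i.
Proof.
case=> rX1 rX2; case: (ord2_cases i) => ->; case: (ord2_cases j) => ->;
  rewrite !mxE /= ?oppr0 ?conjC0 // !(rmorphD, rmorphN, rmorphM) /= conjCi;
  rewrite !conj_Creal //; ring.
Qed.

Lemma gam_dot X Y i : realvec X -> realvec Y ->
  gam X i (opp2 i) * (gam Y i (opp2 i))^* + (gam X i (opp2 i))^* * gam Y i (opp2 i)
  = 2 * dot X Y.
Proof.
move=> rX rY; rewrite (gam_skew _ _ rX) (gam_skew _ _ rY).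
case: (ord2_cases i) => ->; rewrite !mxE /=.
all: transitivity (2 * dot X Y - 2 * X.2 * Y.2 * ('i * 'i + 1)); first by rewrite /dot; ring.
all: by rewrite mulCii addNr mulr0 subr0.
Qed.

Lemma gam_unit X i : realvec X -> dot X X = 1 ->
  gam X i (opp2 i) * (gam X i (opp2 i))^* = 1.
Proof.
move=> rX hX; have two_nz : (2 : C) != 0 by rewrite pnatr_eq0.
apply: (mulfI two_nz); transitivity (2 * dot X X); last by rewrite hX.
by rewrite -(gam_dot i rX rX) mulr_natl mulr2n [X in _ + X]mulrC.
Qed.

Lemma gam_scale (a : C) X i j : gam (a * X.1, a * X.2) i j = a * gam X i j.
Proof. by rewrite !mxE /=; case: ifP => _; [|case: ifP => _]; ring. Qed.

Lemma vnorm_real X : realvec X -> vnorm X \is Num.real.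
Proof.
case=> rx ry; apply: ger0_real; rewrite sqrtC_ge0 /dot.
by apply: addr_ge0; rewrite -expr2 real_exprn_even_ge0.
Qed.

End RealVectors.

Section ScalarIdentity.
Variable C : numClosedFieldType.

(* For unit complex numbers z1, z2 with z1 conj(z2) purely imaginary
   (the coordinates of an orthonormal frame), multiplication by z1 conj(z2)
   turns  z1 u + z2 v  into  z1 v - z2 u  (rotation by a right angle). *)
Lemma rotate_frame (z1 z2 u v c : C) :
  z1 * z1^* = 1 -> z2 * z2^* = 1 -> z1 * z2^* + z1^* * z2 = 0 ->
  z1 * u + z2 * v = c -> z1 * v - z2 * u = z1 * z2^* * c.
Proof.
move=> h1 h2 ho <-.
have -> : z1 * v - z2 * u = z1 * z2^* * (z1 * u + z2 * v) + z1 * v * (1 - z2 * z2^*)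
          - z2 * u * (1 - z1 * z1^*) - z1 * u * (z1 * z2^* + z1^* * z2) by ring.
by rewrite h1 h2 ho !subrr !mulr0 !subr0 addr0.
Qed.

Lemma Re_imaginary_real (w r : C) : w^* = - w -> r \is Num.real -> 'Re (w * r) = 0.
Proof. by move=> hw hr; rewrite ReMr // ReE hw subrr !mul0r. Qed.

(* The scalar form of the theorem, for one component (e,d):
   u, v are the components of nabla_{e1} phi, nabla_{e2} phi, z1, z2 the
   Clifford coefficients of e1, e2, q = phi^{e'd'} times the coefficient of e3,
   n = |H|, P = phi^{e'd} and s = +-1 the sign of bar on the E-index d. *)
Lemma scalar_identity (z1 z2 u v q P lam n s : C) :
  z1 * z1^* = 1 -> z2 * z2^* = 1 -> z1 * z2^* + z1^* * z2 = 0 ->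
  n \is Num.real -> s \is Num.real -> s * s = 1 ->
  z1 * u * s + z2 * v * s = n * q - 2 * lam * P ->
  'Re (u * (- z2^* * q * s)^*) =
    'Re (v * (- z1^* * q * s)^*) - 2 * 'Re (lam * P * (z1 * (- z2^* * q * s) * s)^*).
Proof.
move=> h1 h2 ho hn hs hss dirac.
have rot : z1 * v - z2 * u = z1 * z2^* * s * (n * q - 2 * lam * P).
  rewrite -mulrA -dirac; apply: rotate_frame => //.
  have -> : s * (z1 * u * s + z2 * v * s) = s * s * (z1 * u + z2 * v) by ring.
  by rewrite hss mul1r.
have imag : 'Re (z1 * z2^* * (n * (q * q^*))) = 0.
  apply: Re_imaginary_real.
    by rewrite rmorphM /= conjCK; apply/eqP; rewrite -addr_eq0 addrC ho.
  by apply: rpredM => //; apply/CrealP; rewrite rmorphM /= conjCK mulrC.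
rewrite -(ReMl (@realn _ 2)) -raddfB /= -[RHS]addr0 -imag -raddfD /=; congr ('Re _).
rewrite !(rmorphM, rmorphN) /= !conjCK (conj_Creal hs).
(* The discrepancy is a combination of rot, s^2 = 1 and orthogonality. *)
have -> : u * (- z2 * q^* * s) =
    v * (- z1 * q^* * s) - 2 * (lam * P * (z1^* * (- z2 * q^* * s) * s))
    + z1 * z2^* * (n * (q * q^*))
    + q^* * s * (z1 * v - z2 * u - z1 * z2^* * s * (n * q - 2 * lam * P))
    + z1 * z2^* * (n * (q * q^*)) * (s * s - 1)
    - 2 * lam * P * q^* * s * s * (z1 * z2^* + z1^* * z2) by ring.
by rewrite rot ho hss !subrr !mulr0 !subr0 !addr0.
Qed.

End ScalarIdentity.

Lemma component_identity (C : numClosedFieldType) (lam n : C) (H e1 e2 e3 : C * C)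
    (phi d1 d2 : spinor C) (e d : 'I_2) :
  n \is Num.real -> realvec e1 -> realvec e2 ->
  dot e1 e1 = 1 -> dot e2 e2 = 1 -> dot e1 e2 = 0 ->
  H = (n * e3.1, n * e3.2) ->
  clifTM e1 d1 + clifTM e2 d2 = clifE H phi - (2 * lam) *: phi ->
  Fcomp e d d1 e2 e3 phi =
    Fcomp e d d2 e1 e3 phi - corr lam (opp2 e) d (opp2 e) (opp2 d) e1 e2 e3 phi.
Proof.
move=> hn r1 r2 h11 h22 h12 -> /(dirac_entry e d).
rewrite gam_scale [phi _ _ * _]mulrCA => dirac.
rewrite !Fcomp_entry corr_entry.
rewrite -[gam e1 e _]opprK -[gam e2 e _]opprK -(gam_skew _ _ r1) -(gam_skew _ _ r2).
apply: scalar_identity dirac => //; rewrite ?barM_real ?barM_sq //.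
- by have := gam_unit (opp2 e) r1 h11; rewrite opp2K.
- by have := gam_unit (opp2 e) r2 h22; rewrite opp2K.
- by have := gam_dot (opp2 e) r1 r2; rewrite opp2K h12 mulr0.
Qed.

Theorem mainTheorem6 (C : numClosedFieldType) (lam : C)
    (H e1 e2 e3 : C * C) (phi d1 d2 : spinor C) :
  (lam \is Num.real \/ 'Re lam = 0) ->
  realvec H -> realvec e1 -> realvec e2 -> realvec e3 ->
  dot e1 e1 = 1 -> dot e2 e2 = 1 -> dot e1 e2 = 0 ->
  dot e3 e3 = 1 ->
  H = (vnorm H * e3.1, vnorm H * e3.2) ->
  (* D phi = H . phi - 2 lam phi at p, with d1 = nabla_{e1} phi (p), d2 = nabla_{e2} phi (p) *)
  clifTM e1 d1 + clifTM e2 d2 = clifE H phi - (2 * lam) *: phi ->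
  [/\ Fcomp ip ip d1 e2 e3 phi = Fcomp ip ip d2 e1 e3 phi - corr lam im ip im im e1 e2 e3 phi,
      Fcomp im im d1 e2 e3 phi = Fcomp im im d2 e1 e3 phi - corr lam ip im ip ip e1 e2 e3 phi,
      Fcomp ip im d1 e2 e3 phi = Fcomp ip im d2 e1 e3 phi - corr lam im im im ip e1 e2 e3 phi
    & Fcomp im ip d1 e2 e3 phi = Fcomp im ip d2 e1 e3 phi - corr lam ip ip ip im e1 e2 e3 phi].
Proof.
move=> _ rH r1 r2 _ h11 h22 h12 _ hH dirac.
have component e d :=
  component_identity e d (vnorm_real rH) r1 r2 h11 h22 h12 hH dirac.
by split; [exact: component ip ip | exact: component im im
          | exact: component ip im | exact: component im ip].
Qed.
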